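(* Let $\mathbf{A}\in\mathbb{R}^{M\times N}$, $\mathbf{Y}\in\mathbb{R}^{M\times L}$, and let $(\mathbf{g}(t),\mathbf{V}(t))$, $t\ge0$, evolve under the continuous gradient flow of $\mathcal{L}(\mathbf{g},\mathbf{V})=\Vert\mathbf{Y}-\mathbf{A}((\mathbf{g}^{\odot 2}\mathbf{1}_L)\odot\mathbf{V})\Vert_F^2$. Fix $i\in[N]$ and write $\mathbf{V}_{i:}(t)$ for the $i$-th row of $\mathbf{V}(t)$. Case I: if $\frac{1}{\sqrt2}|g_i(0)|=\Vert\mathbf{V}_{i:}(0)\Vert=0$, then $\frac{1}{\sqrt2}|g_i(t)|=\Vert\mathbf{V}_{i:}(t)\Vert=0$ for all $t>0$. Case II: if $\frac{1}{\sqrt2}|g_i(0)|=\Vert\mathbf{V}_{i:}(0)\Vert>0$, then $\frac{1}{\sqrt2}|g_i(t)|=\Vert\mathbf{V}_{i:}(t)\Vert>0$ for all $t>0$.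
   Context: $\odot$ is the entrywise product, $\mathbf{1}_L$ the $1\times L$ all-ones row vector, so the estimate has entries $g_i^2V_{ij}$; $\Vert\cdot\Vert$ on a row is the Euclidean norm. Gradient flow: $\frac{d}{dt}g_l=-\partial\mathcal{L}/\partial g_l$, $\frac{d}{dt}V_{lm}=-\partial\mathcal{L}/\partial V_{lm}$ along the curve. *)

From HB Require Import structures.
From mathcomp Require Import all_boot all_order all_algebra.
From mathcomp Require Import all_classical all_reals all_analysis.
Set Implicit Arguments. Unset Strict Implicit. Unset Printing Implicit Defensive.
Import Order.TTheory GRing.Theory Num.Theory.
Local Open Scope classical_set_scope.
Local Open Scope ring_scope.
Import numFieldNormedType.Exports.

Section Defs.
Variables (R : realType) (M N L : nat).

(* the estimate (g^{o2} 1_L) o V : entries g_i^2 V_ij *)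
Definition estim (g : 'I_N -> R) (V : 'M[R]_(N, L)) : 'M[R]_(N, L) :=
  \matrix_(i, j) (g i ^+ 2 * V i j).

Definition loss (A : 'M[R]_(M, N)) (Y : 'M[R]_(M, L))
    (g : 'I_N -> R) (V : 'M[R]_(N, L)) : R :=
  \sum_(m < M) \sum_(l < L) (Y m l - (A *m estim g V) m l) ^+ 2.

Definition dL_dg A Y (g : 'I_N -> R) V (k : 'I_N) : R :=
  derive1 (fun s : R => loss A Y (fun j => g j + (if j == k then s else 0)) V) 0.

Definition dL_dV A Y (g : 'I_N -> R) (V : 'M[R]_(N, L)) (k : 'I_N) (l : 'I_L) : R :=
  derive1 (fun s : R => loss A Y g (V + s *: delta_mx k l)) 0.

Definition rownorm (V : 'M[R]_(N, L)) (i : 'I_N) : R :=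
  Num.sqrt (\sum_(j < L) V i j ^+ 2).

Definition grad_flow A Y (g : R -> 'I_N -> R) (V : R -> 'M[R]_(N, L)) : Prop :=
  (forall t : R, 0 < t ->
     (forall k, is_derive t 1 (fun s => g s k) (- dL_dg A Y (g t) (V t) k)) /\
     (forall k l, is_derive t 1 (fun s => V s k l) (- dL_dV A Y (g t) (V t) k l))) /\
  (forall k, (fun s => g s k) x @[x --> 0^'+] --> g 0 k) /\
  (forall k l, (fun s => V s k l) x @[x --> 0^'+] --> V 0 k l).

End Defs.

(* Along the flow, g_i' = 4 c_i g_i and V_il' = 2 g_i^2 (A^T r)_il, where r is the
   residual Y - A ((g^2 1_L) o V) and c_i = sum_l V_il (A^T r)_il.  Hence
   (g_i^2 - 2 ||V_i:||^2)' = 8 g_i^2 c_i - 8 g_i^2 c_i = 0: the balance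
   g_i^2 = 2 ||V_i:||^2 is conserved.  Moreover g_i solves a linear ODE whose
   coefficient is bounded by some K on [0, t], so g_i(t)^2 e^{-2Kt} <= g_i(0)^2
   <= g_i(t)^2 e^{2Kt} (Gronwall) and g_i(t) vanishes iff g_i(0) does.  Under the
   balance ||V_i:|| = |g_i| / sqrt 2, which gives both cases. *)

From HB Require Import structures.
From mathcomp Require Import all_boot all_order all_algebra.
From mathcomp Require Import all_classical all_reals all_analysis.
From mathcomp Require Import ring lra.
Import Order.TTheory GRing.Theory Num.Theory.
Import numFieldNormedType.Exports.
Set Implicit Arguments. Unset Strict Implicit. Unset Printing Implicit Defensive.
Local Open Scope classical_set_scope.
Local Open Scope ring_scope.

Lemma scaleRE (R : pzRingType) (a b : R^o) : a *: b = a * b.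
Proof. by []. Qed.

Section Loss.
Variables (R : realType) (M N L : nat) (A : 'M[R]_(M, N)) (Y : 'M[R]_(M, L)).

Definition estim_loss (E : 'M[R]_(N, L)) : R :=
  \sum_(m < M) \sum_(l < L) (Y m l - (A *m E) m l) ^+ 2.

(* Minus half the gradient of [estim_loss] at [E]. *)
Definition backres (E : 'M[R]_(N, L)) : 'M[R]_(N, L) := A^T *m (Y - A *m E).

Definition mxdot (X Z : 'M[R]_(N, L)) : R := \sum_(k < N) \sum_(l < L) X k l * Z k l.

Lemma estim_loss_shift (E D : 'M[R]_(N, L)) (p : R) :
  estim_loss (E + p *: D) =
  estim_loss E - 2 * p * mxdot (backres E) D
  + p ^+ 2 * \sum_(m < M) \sum_(l < L) (A *m D) m l ^+ 2.
Proof.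
have adj : mxdot (backres E) D =
    \sum_(m < M) \sum_(l < L) (Y m l - (A *m E) m l) * (A *m D) m l.
  rewrite /mxdot /backres.
  transitivity (\sum_(k < N) \sum_(l < L) \sum_(m < M)
                  A m k * (Y m l - (A *m E) m l) * D k l).
    apply: eq_bigr => k _; apply: eq_bigr => l _.
    by rewrite !mxE big_distrl; apply: eq_bigr => m _; rewrite !mxE.
  under eq_bigr do rewrite exchange_big.
  rewrite exchange_big; apply: eq_bigr => m _; rewrite exchange_big.
  apply: eq_bigr => l _; rewrite !mxE mulr_sumr.
  by apply: eq_bigr => k _; ring.
rewrite adj /estim_loss mulr_sumr mulr_sumr -sumrB -big_split /=.
apply: eq_bigr => m _; rewrite mulr_sumr mulr_sumr -sumrB -big_split /=.
by apply: eq_bigr => l _; rewrite linearD linearZ !mxE /=; ring.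
Qed.

Lemma derive1_estim_loss_shift (E D : 'M[R]_(N, L)) (phi : R -> R) (d : R) :
  phi 0 = 0 -> is_derive (0 : R) 1 phi d ->
  derive1 (fun s => estim_loss (E + phi s *: D)) 0 = - 2 * mxdot (backres E) D * d.
Proof.
move=> phi0 dphi; under eq_fun do rewrite estim_loss_shift.
rewrite derive1E; apply: derive_val; apply: is_derive_eq.
by rewrite phi0 !scaleRE; ring.
Qed.

Definition row_only (V : 'M[R]_(N, L)) k : 'M[R]_(N, L) :=
  \matrix_(i, j) ((i == k)%:R * V i j).

Lemma estim_shift_g (g : 'I_N -> R) (V : 'M[R]_(N, L)) (k : 'I_N) (s : R) :
  estim (fun j => g j + (if j == k then s else 0)) V =
  estim g V + ((g k + s) ^+ 2 - g k ^+ 2) *: row_only V k.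
Proof.
by apply/matrixP => i j; rewrite !mxE; case: eqP => [->|_] /=; ring.
Qed.

Lemma estim_shift_V (g : 'I_N -> R) (V : 'M[R]_(N, L)) k l (s : R) :
  estim g (V + s *: delta_mx k l) = estim g V + (g k ^+ 2 * s) *: delta_mx k l.
Proof.
apply/matrixP => i j; rewrite !mxE.
by case: eqP => [->|_]; case: eqP => _ /=; ring.
Qed.

Lemma mxdot_row_only (X V : 'M[R]_(N, L)) k :
  mxdot X (row_only V k) = \sum_(l < L) X k l * V k l.
Proof.
rewrite /mxdot (bigD1 k) //= [X in _ + X]big1 ?addr0 => [|i ik].
  by apply: eq_bigr => l _; rewrite mxE eqxx mul1r.
by apply: big1 => l _; rewrite mxE (negbTE ik) mul0r mulr0.
Qed.

Lemma mxdot_delta (X : 'M[R]_(N, L)) k l : mxdot X (delta_mx k l) = X k l.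
Proof.
rewrite /mxdot (bigD1 k) //= [X in _ + X]big1 ?addr0 => [|i ik].
  rewrite (bigD1 l) //= [X in _ + X]big1 ?addr0 => [|j jl].
    by rewrite mxE !eqxx mulr1.
  by rewrite mxE eqxx (negbTE jl) mulr0.
by apply: big1 => j _; rewrite mxE (negbTE ik) mulr0.
Qed.

Lemma backres_estimE (g : 'I_N -> R) (V : 'M[R]_(N, L)) k l :
  backres (estim g V) k l =
  \sum_(m < M) A m k * (Y m l - \sum_(n < N) A m n * (g n ^+ 2 * V n l)).
Proof.
rewrite mxE; apply: eq_bigr => m _; rewrite !mxE; congr (_ * (_ - _)).
by apply: eq_bigr => n _; rewrite mxE.
Qed.

Lemma dL_dgE (g : 'I_N -> R) (V : 'M[R]_(N, L)) k :
  dL_dg A Y g V k = - 4 * g k * \sum_(l < L) backres (estim g V) k l * V k l.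
Proof.
have dphi : is_derive (0 : R) 1 (fun s => (g k + s) ^+ 2 - g k ^+ 2) (2 * g k).
  by apply: is_derive_eq; rewrite !scaleRE; ring.
rewrite /dL_dg /loss -/(estim_loss _); under eq_fun do rewrite estim_shift_g.
by rewrite (derive1_estim_loss_shift _ _ _ dphi) ?mxdot_row_only ?addr0 ?subrr //; ring.
Qed.

Lemma dL_dVE (g : 'I_N -> R) (V : 'M[R]_(N, L)) k l :
  dL_dV A Y g V k l = - 2 * g k ^+ 2 * backres (estim g V) k l.
Proof.
have dphi : is_derive (0 : R) 1 (fun s => g k ^+ 2 * s) (g k ^+ 2).
  by apply: is_derive_eq; rewrite scaleRE mulr1.
rewrite /dL_dV /loss -/(estim_loss _); under eq_fun do rewrite estim_shift_V.
by rewrite (derive1_estim_loss_shift _ _ _ dphi) ?mxdot_delta ?mulr0 //; ring.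
Qed.

End Loss.

Lemma is_derive_expR_scale (R : realType) (c x : R) :
  is_derive x 1 (fun s => expR (c * s)) (c * expR (c * x)).
Proof.
have dlin : is_derive x 1 (fun s : R => c * s) c.
  by apply: is_derive_eq; rewrite scaleRE mulr1.
by rewrite mulrC; exact: (is_derive1_comp (is_derive_expR _) dlin).
Qed.

Section LinearODE.
Variables (R : realType) (f a : R -> R) (t : R).
Hypotheses (t_gt0 : 0 < t) (f_cont : {within `[0, t], continuous f})
  (f_ode : forall x, x \in `]0, t[ -> is_derive x 1 f (a x * f x)).

Let weighted (c s : R) := f s ^+ 2 * expR (c * s).

Let is_derive_weighted c x : x \in `]0, t[ ->
  is_derive x 1 (weighted c) ((2 * a x + c) * weighted c x).
Proof.
move=> /f_ode df; have de := is_derive_expR_scale c x.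
have {1}-> : weighted c = f * f * (fun s => expR (c * s)).
  by apply/funext => s; rewrite /weighted /= expr2.
by apply: is_derive_eq; rewrite /weighted !fctE !scaleRE; ring.
Qed.

Let weighted_continuous c : {within `[0, t], continuous (weighted c)}.
Proof.
have ce : continuous (fun s : R => expR (c * s)).
  move=> s; apply: continuous_comp; last exact: continuous_expR.
  exact: cvgMr.
move=> x; apply: cvgM; first by rewrite expr2; apply: cvgM; exact: f_cont.
exact: continuous_subspaceT.
Qed.

Let derive1_weighted c x : x \in `]0, t[ ->
  derive1 (weighted c) x = (2 * a x + c) * weighted c x.
Proof. by move=> /(is_derive_weighted c) dw; rewrite derive1E derive_val. Qed.

Let derivable_weighted c x : x \in `]0, t[ -> derivable (weighted c) x 1.
Proof. by move=> /(is_derive_weighted c) dw. Qed.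

Lemma linear_ode_sqr_bounds K : (forall x, x \in `]0, t[ -> `|a x| <= K) ->
  f t ^+ 2 * expR (- (2 * K) * t) <= f 0 ^+ 2 <= f t ^+ 2 * expR (2 * K * t).
Proof.
move=> aK; have w0 c : weighted c 0 = f 0 ^+ 2 by rewrite /weighted mulr0 expR0 mulr1.
have w_ge0 c x : 0 <= weighted c x by rewrite mulr_ge0 ?sqr_ge0 ?expR_ge0.
have t0 : 0 \in `[0, t] by rewrite in_itv /= lexx ltW.
have tt : t \in `[0, t] by rewrite in_itv /= lexx ltW.
have [a_le a_ge] : (forall x, x \in `]0, t[ -> a x <= K) /\
                   (forall x, x \in `]0, t[ -> - K <= a x).
  by split=> x /aK; rewrite ler_norml => /andP[].
apply/andP; split.
- have dw_le0 x : x \in `]0, t[ -> derive1 (weighted (- (2 * K))) x <= 0.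
    by move=> x0t; rewrite derive1_weighted // mulr_le0_ge0 //; have := a_le x x0t; lra.
  rewrite -(w0 (- (2 * K))).
  exact: (ler0_derive1_le_cc (derivable_weighted (c := _)) dw_le0
    (weighted_continuous (c := _)) tt t0 (ltW t_gt0)).
- have dw_ge0 x : x \in `]0, t[ -> 0 <= derive1 (weighted (2 * K)) x.
    by move=> x0t; rewrite derive1_weighted // mulr_ge0 //; have := a_ge x x0t; lra.
  rewrite -(w0 (2 * K)).
  exact: (ger0_derive1_le_cc (derivable_weighted (c := _)) dw_ge0
    (weighted_continuous (c := _)) t0 tt (ltW t_gt0)).
Qed.

Hypothesis a_cont : {within `[0, t], continuous a}.

Lemma linear_ode_eq0 : (f t == 0) = (f 0 == 0).
Proof.
have norm_a_cont : {within `[0, t], continuous (fun x => `|a x|)}.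
  by move=> x; apply: cvg_norm; exact: a_cont.
have [c _ a_max] := EVT_max (ltW t_gt0) norm_a_cont.
have /andP[lo hi] : f t ^+ 2 * expR (- (2 * `|a c|) * t) <= f 0 ^+ 2
                    <= f t ^+ 2 * expR (2 * `|a c| * t).
  by apply: linear_ode_sqr_bounds => x /subset_itv_oo_cc /a_max.
rewrite -[f t == 0]sqrf_eq0 -[f 0 == 0]sqrf_eq0 !eq_le !sqr_ge0 !andbT.
apply/idP/idP => [ft0|f00].
- by apply: le_trans hi _; rewrite pmulr_lle0 ?expR_gt0.
- by rewrite -(pmulr_lle0 _ (expR_gt0 (- (2 * `|a c|) * t))) (le_trans lo).
Qed.

End LinearODE.

Lemma normr_div_sqrt2_gt0 (R : rcfType) (a : R) : (0 < `|a| / Num.sqrt 2) = (a != 0).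
Proof. by rewrite pmulr_lgt0 ?invr_gt0 ?sqrtr_gt0 ?ltr0n // normr_gt0. Qed.

Lemma normr_div_sqrt2_eq0 (R : rcfType) (a : R) : (`|a| / Num.sqrt 2 == 0) = (a == 0).
Proof.
by apply/negb_inj; rewrite -normr_div_sqrt2_gt0 lt_def divr_ge0 ?sqrtr_ge0 // andbT.
Qed.

Lemma balancedE (R : realType) (N L : nat) (a : R) (V : 'M[R]_(N, L)) k :
  `|a| / Num.sqrt 2 = rownorm V k <-> a ^+ 2 = 2 * \sum_(l < L) V k l ^+ 2.
Proof.
have S_ge0 : 0 <= \sum_(l < L) V k l ^+ 2 by apply: sumr_ge0 => l _; exact: sqr_ge0.
have -> : `|a| / Num.sqrt 2 = Num.sqrt (a ^+ 2 / 2).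
  by rewrite sqrtrM ?sqr_ge0 // sqrtr_sqr sqrtrV.
rewrite /rownorm; split => [/eqP|->].
  by rewrite eqr_sqrt ?divr_ge0 ?sqr_ge0 // => /eqP <-; field.
by congr Num.sqrt; field.
Qed.

Section GradientFlow.
Variables (R : realType) (M N L : nat) (A : 'M[R]_(M, N)) (Y : 'M[R]_(M, L))
  (g : R -> 'I_N -> R) (V : R -> 'M[R]_(N, L)).
Hypothesis flow : grad_flow A Y g V.

Let B s := backres A Y (estim (g s) (V s)).

Lemma flow_g_derive (t : R) k : 0 < t ->
  is_derive t 1 (fun s => g s k) ((4 * \sum_(l < L) B t k l * V t k l) * g t k).
Proof.
move=> /(flow.1 t) [dg _]; have := dg k; rewrite dL_dgE => dgk.
by apply: is_derive_eq; ring.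
Qed.

Lemma flow_V_derive (t : R) k l : 0 < t ->
  is_derive t 1 (fun s => V s k l) (2 * g t k ^+ 2 * B t k l).
Proof.
move=> /(flow.1 t) [_ dV]; have := dV k l; rewrite dL_dVE => dVkl.
by apply: is_derive_eq; ring.
Qed.

(* Stated for an arbitrary filter so that one limit computation serves at interior
   points, at [0^'+] (where the flow is only right-continuous) and at [t^'-]. *)
Definition continuous_in_state (phi : R -> R) :=
  forall (F : set_system R) (s0 : R), Filter F ->
    (forall k, g x k @[x --> F] --> g s0 k) ->
    (forall k l, V x k l @[x --> F] --> V s0 k l) ->
    phi x @[x --> F] --> phi s0.

Lemma within_continuous_in_state phi (t : R) : 0 < t -> continuous_in_state phi ->
  {within `[0, t], continuous phi}.
Proof.
move=> t_gt0 phi_cont.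
have cont_at (x : R) : 0 < x -> phi s @[s --> x] --> phi x.
  move=> x_gt0; apply: phi_cont => [k|k l]; apply: differentiable_continuous;
    apply/derivable1_diffP.
  - by have [dg _] := flow.1 x x_gt0; have dgk := dg k; exact: ex_derive.
  - by have [_ dV] := flow.1 x x_gt0; have dVkl := dV k l; exact: ex_derive.
apply/continuous_within_itvP => //; split.
- by move=> x /[!in_itv] /andP[x_gt0 _]; exact: cont_at.
- by apply: phi_cont; [exact: flow.2.1 | exact: flow.2.2].
- exact: cvg_at_left_filter (cont_at t t_gt0).
Qed.

Lemma backres_continuous_in_state k l : continuous_in_state (fun s => B s k l).
Proof.
move=> F s0 FF cg cV; rewrite /B.
under eq_cvg do rewrite backres_estimE; rewrite backres_estimE.
apply: (cvg_big add_continuous) => // m _; apply: cvgM; first exact: cvg_cst.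
apply: cvgB; first exact: cvg_cst.
apply: (cvg_big add_continuous) => // n _; apply: cvgM; first exact: cvg_cst.
under eq_fun do rewrite expr2; rewrite expr2.
by apply: cvgM; first apply: cvgM.
Qed.

Lemma flow_g_eq0 (t : R) k : 0 < t -> (g t k == 0) = (g 0 k == 0).
Proof.
move=> t_gt0.
apply: (@linear_ode_eq0 _ (fun s => g s k)
  (fun s => 4 * \sum_(l < L) B s k l * V s k l) _ t_gt0).
- by apply: within_continuous_in_state => // F s0 FF cg _; exact: cg.
- by move=> x /[!in_itv] /andP[x_gt0 _]; exact: flow_g_derive.
- apply: within_continuous_in_state => // F s0 FF cg cV.
  apply: cvgM; first exact: cvg_cst.
  apply: (cvg_big add_continuous) => // l _; apply: cvgM => //.
  exact: backres_continuous_in_state.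
Qed.

Definition imbalance s k := g s k ^+ 2 - 2 * \sum_(l < L) V s k l ^+ 2.

Lemma imbalance_derive (t : R) k : 0 < t -> is_derive t 1 (imbalance ^~ k) 0.
Proof.
move=> t_gt0; have dg := flow_g_derive k t_gt0.
have dV l := flow_V_derive k l t_gt0.
have -> : imbalance ^~ k = (fun s => g s k) * (fun s => g s k) -
    2 \*: \sum_(l < L) ((fun s => V s k l) * (fun s => V s k l)).
  by apply/funext => s; rewrite /imbalance !fctE fct_sumE !expr2.
apply: is_derive_eq; rewrite !scaleRE.
set S := \sum_(l < L) B t k l * V t k l.
have -> : \sum_(l < L) (V t k l *: (2 * g t k ^+ 2 * B t k l) +
                        V t k l *: (2 * g t k ^+ 2 * B t k l)) = 4 * g t k ^+ 2 * S.
  by rewrite /S mulr_sumr; apply: eq_bigr => l _; rewrite !scaleRE; ring.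
ring.
Qed.

Lemma imbalance_const (t : R) k : 0 < t -> imbalance t k = imbalance 0 k.
Proof.
move=> t_gt0.
have d_imb x : x \in `]0, t[ -> is_derive x 1 (imbalance ^~ k) 0.
  by move=> /[!in_itv] /andP[x_gt0 _]; exact: imbalance_derive.
have imb_cont : {within `[0, t], continuous (imbalance ^~ k)}.
  apply: within_continuous_in_state => // F s0 FF cg cV.
  under eq_cvg do rewrite /imbalance !expr2; rewrite /imbalance !expr2.
  apply: cvgB; first exact: cvgM.
  apply: cvgM; first exact: cvg_cst.
  by apply: (cvg_big add_continuous) => // l _; apply: cvgM.
have [c _ ] := MVT t_gt0 d_imb imb_cont.
by rewrite mul0r => /eqP; rewrite subr_eq0 => /eqP.
Qed.

Lemma flow_balanced (t : R) k : 0 < t ->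
  `|g 0 k| / Num.sqrt 2 = rownorm (V 0) k -> `|g t k| / Num.sqrt 2 = rownorm (V t) k.
Proof.
move=> t_gt0; rewrite !balancedE => bal0.
move/eqP: (imbalance_const k t_gt0).
by rewrite /imbalance bal0 subrr subr_eq0 => /eqP.
Qed.

End GradientFlow.

Theorem lemmaB6 (R : realType) (M N L : nat)
    (A : 'M[R]_(M, N)) (Y : 'M[R]_(M, L))
    (g : R -> 'I_N -> R) (V : R -> 'M[R]_(N, L)) (i : 'I_N) :
  grad_flow A Y g V ->
  ((`|g 0 i| / Num.sqrt 2 = rownorm (V 0) i /\ rownorm (V 0) i = 0) ->
     forall t : R, 0 < t ->
       `|g t i| / Num.sqrt 2 = rownorm (V t) i /\ rownorm (V t) i = 0) /\
  ((`|g 0 i| / Num.sqrt 2 = rownorm (V 0) i /\ 0 < rownorm (V 0) i) ->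
     forall t : R, 0 < t ->
       `|g t i| / Num.sqrt 2 = rownorm (V t) i /\ 0 < rownorm (V t) i).
Proof.
move=> flow; split=> -[bal0 r0] t t_gt0.
all: have balt := flow_balanced flow t_gt0 bal0; split=> //; rewrite -balt.
- apply/eqP; rewrite normr_div_sqrt2_eq0 (flow_g_eq0 flow) //.
  by rewrite -normr_div_sqrt2_eq0 bal0 r0.
- by rewrite normr_div_sqrt2_gt0 (flow_g_eq0 flow) // -normr_div_sqrt2_gt0 bal0.
Qed.
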